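(* Let $\alpha,\beta\in(0,1)$ with $\alpha+\beta>1$. Then for all $v\in\mathcal{C}^\alpha(L(\mathbb{R}^d,\mathbb{R}^n))$ and $w\in\mathcal{C}^\beta(\mathbb{R}^d)$ the series defining $L(v,w)$ converges uniformly, $L(v,w)\in\mathcal{C}^{\alpha+\beta}(\mathbb{R}^n)$, and $\|L(v,w)\|_{\alpha+\beta}\lesssim\|v\|_\alpha\|w\|_\beta$; i.e. $L$ is a bounded bilinear operator from $\mathcal{C}^\alpha\times\mathcal{C}^\beta$ to $\mathcal{C}^{\alpha+\beta}$.
   Context: Index set: pairs $(p,m)$ with either $p=-1,m=0$, or $p\in\mathbb{N}=\{0,1,2,\dots\}$ and $0\le m\le 2^p$. For $p\in\mathbb{N}$, $1\le m\le 2^p$ set $t^0_{pm}=(m-1)2^{-p}$, $t^1_{pm}=(2m-1)2^{-p-1}$, $t^2_{pm}=m2^{-p}$. Rescaled Haar functions: for $p\in\mathbb{N}$, $1\le m\le 2^p$, $\chi_{pm}=2^p$ on $[t^0_{pm},t^1_{pm})$, $=-2^p$ on $[t^1_{pm},t^2_{pm})$, $=0$ elsewhere; $\chi_{00}\equiv1$; $\chi_{p0}\equiv0$ for $p\ge1$. Rescaled Schauder functions: $\varphi_{pm}(t)=\int_0^t\chi_{pm}(s)\,ds$ for $p\in\mathbb{N}$, and $\varphi_{-10}\equiv1$. For continuous $f:[0,1]\to E$ ($E$ a finite-dimensional normed space), coefficients: $f_{-10}=f(0)$, $f_{00}=f(1)-f(0)$, $f_{p0}=0$ for $p\ge1$,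 $f_{pm}=2f(t^1_{pm})-f(t^0_{pm})-f(t^2_{pm})$ for $p\in\mathbb{N},m\ge1$. Schauder blocks: $\Delta_pf=\sum_{m=0}^{2^p}f_{pm}\varphi_{pm}$ ($p\ge-1$), $S_pf=\sum_{q=-1}^p\Delta_qf$ (piecewise linear). For $\alpha>0$, $\|f\|_\alpha:=\sup_{p,m}2^{p\alpha}|f_{pm}|$ and $\mathcal{C}^\alpha(E):=\{f\in C([0,1],E):\|f\|_\alpha<\infty\}$. For $g$ piecewise linear (or Lipschitz), $\int_0^tf\,dg:=\int_0^tf(s)g'(s)\,ds$ and $\int_0^t dg\,f:=\int_0^t g'(s)f(s)\,ds$. Lévy area: for continuous $v:[0,1]\to L(\mathbb{R}^d,\mathbb{R}^n)$, $w:[0,1]\to\mathbb{R}^d$, \[ L(v,w):=\sum_{p\ge0}\Big(\int_0^\cdot\Delta_pv(s)\,d(S_{p-1}w)(s)-\int_0^\cdot d(S_{p-1}v)(s)\,\Delta_pw(s)\Big) \] whenever this series converges uniformly. $\lesssim$ hides a constant depending only on $\alpha,\beta$. *)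

From Stdlib Require Import Reals List Classical ClassicalEpsilon.
Import ListNotations.
Open Scope R_scope.

Definition rsum (k : nat) (f : nat -> R) : R :=
  fold_right Rplus 0 (map f (seq 0 k)).

(* Riemann integral int_0^t f(s) ds (Stdlib's RiemannInt, which does not
   depend on the integrability proof); an unspecified value if f is not
   Riemann integrable on [0,t]. *)
Definition Rint0 (f : R -> R) (t : R) : R :=
  epsilon (inhabits 0)
    (fun r => exists pr : Riemann_integrable f 0 t, RiemannInt pr = r).

(* the derivative g'(s) where it exists (unspecified at the finitely many
   kinks of a piecewise linear g; irrelevant for the integral). *)
Definition deriv (g : R -> R) (s : R) : R :=
  epsilon (inhabits 0) (fun l => derivable_pt_lim g s l).

(* dyadic points, p in N, 1 <= m <= 2^p *)
Definition t0 (p m : nat) : R := (INR m - 1) / 2 ^ p.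
Definition t1 (p m : nat) : R := (2 * INR m - 1) / 2 ^ (S p).
Definition t2 (p m : nat) : R := INR m / 2 ^ p.

(* rescaled Haar functions chi_{pm}, p in N, 0 <= m <= 2^p *)
Definition chi (p m : nat) (s : R) : R :=
  match m with
  | O => match p with O => 1 | S _ => 0 end
  | S _ =>
      if Rle_dec (t0 p m) s then
        if Rlt_dec s (t1 p m) then 2 ^ p
        else if Rlt_dec s (t2 p m) then - 2 ^ p else 0
      else 0
  end.

(* rescaled Schauder functions phi_{pm}(t) = int_0^t chi_{pm}, p in N
   (phi_{-1,0} = 1 is handled separately below). *)
Definition phi (p m : nat) (t : R) : R := Rint0 (chi p m) t.

(* Schauder coefficients of a scalar function, p in N
   (the coefficient f_{-1,0} = f(0) is handled separately). *)
Definition coef (f : R -> R) (p m : nat) : R :=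
  match m with
  | O => match p with O => f 1 - f 0 | S _ => 0 end
  | S _ => 2 * f (t1 p m) - f (t0 p m) - f (t2 p m)
  end.

Definition Delta (f : R -> R) (p : nat) (t : R) : R :=
  rsum (S (2 ^ p)) (fun m => coef f p m * phi p m t).

(* Spre f k = S_{k-1} f :  S_{-1} f = Delta_{-1} f = f(0) * phi_{-1,0} = f(0),
   S_{p} f = S_{p-1} f + Delta_p f *)
Fixpoint Spre (f : R -> R) (k : nat) (t : R) : R :=
  match k with
  | O => f 0
  | S k' => Spre f k' t + Delta f k' t
  end.

(* Norms on the finite dimensional spaces: sup-norm on R^n (vectors are
   functions nat -> R, components 0..n-1) and the induced operator norm
   (max row sum) on L(R^d,R^n) = n x d matrices (nat -> nat -> R). *)
Definition vnorm (n : nat) (x : nat -> R) : R :=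
  fold_right Rmax 0 (map (fun i => Rabs (x i)) (seq 0 n)).
Definition mnorm (n d : nat) (A : nat -> nat -> R) : R :=
  fold_right Rmax 0 (map (fun i => rsum d (fun j => Rabs (A i j))) (seq 0 n)).

Definition cont01 (f : R -> R) : Prop :=
  forall t, 0 <= t <= 1 -> forall eps, 0 < eps -> exists delta, 0 < delta /\
    forall s, 0 <= s <= 1 -> Rabs (s - t) < delta -> Rabs (f s - f t) < eps.

(* K bounds sup_{p,m} 2^{p alpha} |f_{pm}|, i.e. ||f||_alpha <= K,
   over the whole index set (p = -1, m = 0) and p in N, 0 <= m <= 2^p. *)
Definition HolderBoundV (n : nat) (alpha : R) (f : R -> nat -> R) (K : R) : Prop :=
  Rpower 2 (- alpha) * vnorm n (f 0) <= K /\
  forall p m, (m <= 2 ^ p)%nat ->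
    Rpower 2 (INR p * alpha) * vnorm n (fun i => coef (fun u => f u i) p m) <= K.

Definition HolderBoundM (n d : nat) (alpha : R) (f : R -> nat -> nat -> R) (K : R)
  : Prop :=
  Rpower 2 (- alpha) * mnorm n d (f 0) <= K /\
  forall p m, (m <= 2 ^ p)%nat ->
    Rpower 2 (INR p * alpha) *
      mnorm n d (fun i j => coef (fun u => f u i j) p m) <= K.

Definition CalphaV (n : nat) (alpha : R) (f : R -> nat -> R) (K : R) : Prop :=
  (forall i, (i < n)%nat -> cont01 (fun t => f t i)) /\ HolderBoundV n alpha f K.

Definition CalphaM (n d : nat) (alpha : R) (f : R -> nat -> nat -> R) (K : R)
  : Prop :=
  (forall i j, (i < n)%nat -> (j < d)%nat -> cont01 (fun t => f t i j)) /\
  HolderBoundM n d alpha f K.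

Definition levy_term (d : nat) (v : R -> nat -> nat -> R) (w : R -> nat -> R)
  (p : nat) (t : R) (i : nat) : R :=
  Rint0 (fun s => rsum d (fun j =>
           Delta (fun u => v u i j) p s * deriv (Spre (fun u => w u j) p) s)) t
  - Rint0 (fun s => rsum d (fun j =>
           deriv (Spre (fun u => v u i j) p) s * Delta (fun u => w u j) p s)) t.

Definition levy_partial (d : nat) v w (N : nat) (t : R) (i : nat) : R :=
  rsum N (fun p => levy_term d v w p t i).

Definition levy_converges_to (n d : nat) v w (L : R -> nat -> R) : Prop :=
  forall eps, 0 < eps -> exists N0, forall N, (N0 <= N)%nat ->
    forall t, 0 <= t <= 1 -> forall i, (i < n)%nat ->
      Rabs (levy_partial d v w N t i - L t i) < eps.

(* The p-th Lévy term pairs Delta_p v, a tent of height ~ 2^(-p alpha) on each dyadic cell of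
   level p, with the derivative of S_(p-1) w, constant on these cells and of size
   ~ 2^(p (1 - beta)) (and symmetrically with v and w exchanged). On each cell of level p+1 the
   term is therefore a quadratic with leading coefficient ~ 2^p theta^p, theta = 2^(1-alpha-beta)
   < 1, so it is theta^p-Lipschitz and the series converges uniformly. A Schauder coefficient of
   level r of the sum is a second difference with step 2^(-r-1): for p >= r it is bounded through
   the Lipschitz constant by theta^p 2^(-r), and for p < r its three points lie in one cell where
   the term is quadratic, which gives 2^p theta^p 4^(-r). Both sums over p are ~ 2^(-r(alpha+beta)). *)

From Stdlib Require Import Reals Lra Lia List ClassicalEpsilon.
From Coquelicot Require Import Coquelicot.
(* Imported last, so that [Delta] is the Schauder block and not [R_sqrt.Delta]. *)
Open Scope R_scope.

Lemma fold_right_Rplus_snoc l x :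
  fold_right Rplus 0 (l ++ x :: nil) = fold_right Rplus 0 l + x.
Proof. induction l as [|a l IH]; simpl; [lra|rewrite IH; lra]. Qed.

Lemma rsum_0 f : rsum 0 f = 0.
Proof. reflexivity. Qed.

Lemma rsum_1 f : rsum 1 f = f 0%nat.
Proof. unfold rsum; simpl; ring. Qed.

Lemma rsum_S n f : rsum (S n) f = rsum n f + f n.
Proof. unfold rsum. rewrite seq_S, map_app. apply fold_right_Rplus_snoc. Qed.

Lemma rsum_ext n f g : (forall j, (j < n)%nat -> f j = g j) -> rsum n f = rsum n g.
Proof.
  induction n as [|n IH]; intros H; [reflexivity|].
  rewrite !rsum_S, IH by (intros; apply H; lia). rewrite H by lia. reflexivity.
Qed.

Lemma rsum_plus n f g : rsum n (fun j => f j + g j) = rsum n f + rsum n g.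
Proof. induction n as [|n IH]; [unfold rsum; simpl; lra|]. rewrite !rsum_S, IH; lra. Qed.

Lemma rsum_minus n f g : rsum n (fun j => f j - g j) = rsum n f - rsum n g.
Proof. induction n as [|n IH]; [unfold rsum; simpl; lra|]. rewrite !rsum_S, IH; lra. Qed.

Lemma rsum_mult_r n c f : rsum n (fun j => f j * c) = rsum n f * c.
Proof. induction n as [|n IH]; [unfold rsum; simpl; lra|]. rewrite !rsum_S, IH; lra. Qed.

Lemma rsum_le n f g : (forall j, (j < n)%nat -> f j <= g j) -> rsum n f <= rsum n g.
Proof.
  induction n as [|n IH]; intros H; [unfold rsum; simpl; lra|]. rewrite !rsum_S.
  assert (rsum n f <= rsum n g) by (apply IH; intros; apply H; lia).
  specialize (H n ltac:(lia)); lra.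
Qed.

Lemma rsum_abs_le n f : Rabs (rsum n f) <= rsum n (fun j => Rabs (f j)).
Proof.
  induction n as [|n IH]; [unfold rsum; simpl; rewrite Rabs_R0; lra|]. rewrite !rsum_S.
  eapply Rle_trans; [apply Rabs_triang|lra].
Qed.

Lemma rsum_eq0 n f : (forall j, (j < n)%nat -> f j = 0) -> rsum n f = 0.
Proof.
  induction n as [|n IH]; intros H; [reflexivity|].
  rewrite rsum_S, IH by (intros; apply H; lia). rewrite H by lia. ring.
Qed.

Lemma rsum_eq_single n f k : (k < n)%nat ->
  (forall j, (j < n)%nat -> j <> k -> f j = 0) -> rsum n f = f k.
Proof.
  induction n as [|n IH]; intros Hk H; [lia|]. rewrite rsum_S.
  destruct (Nat.eq_dec k n) as [->|Hne].
  - rewrite rsum_eq0; [lra|]. intros; apply H; lia.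
  - rewrite IH, (H n) by (try lia; intros; apply H; lia). lra.
Qed.

Lemma rsum_abs_mult_le n x y M : (forall j, (j < n)%nat -> Rabs (y j) <= M) ->
  Rabs (rsum n (fun j => x j * y j)) <= rsum n (fun j => Rabs (x j)) * M.
Proof.
  intros H. eapply Rle_trans; [apply rsum_abs_le|]. rewrite <- rsum_mult_r.
  apply rsum_le; intros j Hj. rewrite Rabs_mult.
  apply Rmult_le_compat_l; [apply Rabs_pos|auto].
Qed.

Lemma rsum_second_difference n x y z :
  rsum n (fun p => 2 * x p - y p - z p) = 2 * rsum n x - rsum n y - rsum n z.
Proof.
  rewrite !rsum_minus, (rsum_ext n _ (fun p => x p * 2)) by (intros; ring).
  rewrite rsum_mult_r. ring.
Qed.

Lemma In_le_fold_Rmax l y : In y l -> y <= fold_right Rmax 0 l.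
Proof.
  induction l as [|a l IH]; simpl; [tauto|]. intros [->|H]; [apply Rmax_l|].
  eapply Rle_trans; [apply IH; auto|apply Rmax_r].
Qed.

Lemma fold_Rmax_le l K : 0 <= K -> (forall y, In y l -> y <= K) -> fold_right Rmax 0 l <= K.
Proof. induction l; simpl; intros HK H; auto. apply Rmax_lub; auto. Qed.

Lemma fold_Rmax_ge0 l : 0 <= fold_right Rmax 0 l.
Proof. induction l; simpl; [lra|]. eapply Rle_trans; [eassumption|apply Rmax_r]. Qed.

Lemma vnorm_ge0 n x : 0 <= vnorm n x.
Proof. apply fold_Rmax_ge0. Qed.

Lemma mnorm_ge0 n d A : 0 <= mnorm n d A.
Proof. apply fold_Rmax_ge0. Qed.

Lemma Rabs_le_vnorm n x i : (i < n)%nat -> Rabs (x i) <= vnorm n x.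
Proof.
  intros Hi. apply In_le_fold_Rmax, (in_map (fun i => Rabs (x i))), in_seq. lia.
Qed.

Lemma vnorm_le n x K : 0 <= K -> (forall i, (i < n)%nat -> Rabs (x i) <= K) -> vnorm n x <= K.
Proof.
  intros HK H. apply fold_Rmax_le; auto. intros y Hy. apply in_map_iff in Hy.
  destruct Hy as [i [<- Hi]]. apply in_seq in Hi. apply H; lia.
Qed.

Lemma row_sum_le_mnorm n d A i : (i < n)%nat ->
  rsum d (fun j => Rabs (A i j)) <= mnorm n d A.
Proof.
  intros Hi. apply In_le_fold_Rmax, (in_map (fun i => rsum d (fun j => Rabs (A i j)))), in_seq.
  lia.
Qed.

Lemma Rint0_is_RInt g t v : is_RInt g 0 t v -> Rint0 g t = v.
Proof.
  intros H. unfold Rint0.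
  assert (Hex : exists r, exists pr : Riemann_integrable g 0 t, RiemannInt pr = r).
  { exists (RiemannInt (ex_RInt_Reals_0 g 0 t (ex_intro _ v H))). eexists; reflexivity. }
  destruct (epsilon_spec (inhabits 0) _ Hex) as [pr <-].
  rewrite <- RInt_Reals. apply is_RInt_unique; auto.
Qed.

Lemma Rint0_0 g : Rint0 g 0 = 0.
Proof. apply Rint0_is_RInt, (is_RInt_point g 0). Qed.

Lemma Rint0_eq0 (g : R -> R) t : (forall s, g s = 0) -> Rint0 g t = 0.
Proof.
  intros H. apply Rint0_is_RInt. apply (is_RInt_ext (fun _ => 0)); [intros; auto|].
  replace 0 with ((t - 0) * 0) at 2 by ring. exact (is_RInt_const 0 t 0).
Qed.

Lemma is_RInt_Rplus (f : R -> R) a b c (l1 l2 : R) :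
  is_RInt f a b l1 -> is_RInt f b c l2 -> is_RInt f a c (l1 + l2).
Proof. exact (is_RInt_Chasles f a b c l1 l2). Qed.

Lemma is_RInt_step f a b c : a <= b -> (forall s, a < s < b -> f s = c) ->
  is_RInt f a b ((b - a) * c).
Proof.
  intros Hab H. change ((b - a) * c) with (scal (b - a) c).
  apply (is_RInt_ext (fun _ => c)); [|apply is_RInt_const].
  intros x. rewrite Rmin_left, Rmax_right by lra. intros Hx; symmetry; apply H; auto.
Qed.

Lemma deriv_of_lim (g : R -> R) s l : derivable_pt_lim g s l -> deriv g s = l.
Proof.
  intros H. unfold deriv.
  pose proof (epsilon_spec (inhabits 0) _ (ex_intro _ l H)) as H2.
  eapply uniqueness_limite; eauto.
Qed.

Lemma deriv_affine_on (g : R -> R) s a b A B : a < s < b ->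
  (forall t, a <= t <= b -> g t = A + (t - a) * B) -> deriv g s = B.
Proof.
  intros Hs H. apply deriv_of_lim, is_derive_Reals.
  apply (is_derive_ext_loc (fun t => A + (t - a) * B)).
  - apply (locally_interval _ s a b); simpl; try lra.
    intros y Hy1 Hy2. symmetry. apply H. simpl in *; lra.
  - auto_derive; auto. ring.
Qed.

Definition dyad (p k : nat) : R := INR k / 2 ^ p.

Definition tent (p m : nat) (t : R) : R :=
  if Rle_dec t (t0 p m) then 0
  else if Rle_dec t (t1 p m) then 2 ^ p * (t - t0 p m)
  else if Rle_dec t (t2 p m) then 2 ^ p * (t2 p m - t)
  else 0.

Definition slope (f : R -> R) (p k : nat) : R := 2 ^ p * (f (dyad p (S k)) - f (dyad p k)).

Lemma pow2_pos p : 0 < 2 ^ p.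
Proof. apply pow_lt; lra. Qed.

Lemma pow2_neq0 p : 2 ^ p <> 0.
Proof. apply pow_nonzero; lra. Qed.

Lemma inv_pow2_pos p : 0 < / 2 ^ p.
Proof. apply Rinv_0_lt_compat, pow2_pos. Qed.

Lemma INR_pow2 q : INR (2 ^ q) = 2 ^ q.
Proof. rewrite pow_INR. reflexivity. Qed.

Lemma dyad_S p k : dyad p (S k) = dyad p k + / 2 ^ p.
Proof. unfold dyad. rewrite S_INR. field. apply pow2_neq0. Qed.

Lemma dyad_double p k : dyad (S p) (2 * k) = dyad p k.
Proof. unfold dyad. rewrite mult_INR. simpl. field. apply pow2_neq0. Qed.

Lemma dyad_double_1 p k : dyad (S p) (2 * k + 1) = dyad p k + / (2 * 2 ^ p).
Proof. unfold dyad. rewrite plus_INR, mult_INR. simpl. field. apply pow2_neq0. Qed.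

Lemma dyad_double_2 p k : dyad (S p) (S (2 * k + 1)) = dyad p k + / 2 ^ p.
Proof. unfold dyad. rewrite S_INR, plus_INR, mult_INR. simpl. field. apply pow2_neq0. Qed.

Lemma dyad_ge0 p k : 0 <= dyad p k.
Proof. unfold dyad. apply Rmult_le_pos; [apply pos_INR|left; apply inv_pow2_pos]. Qed.

Lemma dyad_le p k l : (k <= l)%nat -> dyad p k <= dyad p l.
Proof. intros H. apply Rmult_le_compat_r; [left; apply inv_pow2_pos|apply le_INR; auto]. Qed.

Lemma dyad_top p : dyad p (2 ^ p) = 1.
Proof.
  unfold dyad. rewrite INR_pow2. field. apply pow2_neq0.
Qed.

Lemma t0_dyad p k : t0 p (S k) = dyad p k.
Proof. unfold t0, dyad. rewrite S_INR. field. apply pow2_neq0. Qed.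

Lemma t1_dyad p k : t1 p (S k) = dyad p k + / (2 * 2 ^ p).
Proof. unfold t1, dyad. rewrite S_INR. simpl. field. apply pow2_neq0. Qed.

Lemma t2_dyad p k : t2 p (S k) = dyad p k + / 2 ^ p.
Proof. apply dyad_S. Qed.

Lemma t1_midpoint p m : t1 p m = (t0 p m + t2 p m) / 2.
Proof. unfold t0, t1, t2. simpl. field. apply pow2_neq0. Qed.

Lemma t_spacing p m : t1 p m = t0 p m + / 2 ^ S p /\ t2 p m = t1 p m + / 2 ^ S p.
Proof. unfold t0, t1, t2. simpl. split; field; apply pow2_neq0. Qed.

Lemma t0_lt_t1_lt_t2 p m : t0 p m < t1 p m < t2 p m.
Proof. destruct (t_spacing p m). pose proof (inv_pow2_pos (S p)). lra. Qed.

Lemma t0_ge0 p m : (1 <= m)%nat -> 0 <= t0 p m.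
Proof. intros H. destruct m as [|k]; [lia|]. rewrite t0_dyad. apply dyad_ge0. Qed.

Lemma t2_le1 p m : (m <= 2 ^ p)%nat -> t2 p m <= 1.
Proof. intros H. rewrite <- (dyad_top p). apply dyad_le; auto. Qed.

Lemma tent_left p m t : t0 p m <= t <= t1 p m -> tent p m t = 2 ^ p * (t - t0 p m).
Proof.
  intros H. unfold tent. destruct (Rle_dec t (t0 p m)).
  - replace t with (t0 p m) by lra. ring.
  - destruct (Rle_dec t (t1 p m)); [reflexivity|lra].
Qed.

Lemma tent_right p m t : t1 p m <= t <= t2 p m -> tent p m t = 2 ^ p * (t2 p m - t).
Proof.
  intros H. pose proof (t0_lt_t1_lt_t2 p m). pose proof (t1_midpoint p m). unfold tent.
  destruct (Rle_dec t (t0 p m)); [lra|]. destruct (Rle_dec t (t1 p m)).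
  - replace t with (t1 p m) by lra. rewrite H1. lra.
  - destruct (Rle_dec t (t2 p m)); [reflexivity|lra].
Qed.

Lemma tent_out p m t : t <= t0 p m \/ t2 p m <= t -> tent p m t = 0.
Proof.
  intros H. pose proof (t0_lt_t1_lt_t2 p m). unfold tent.
  destruct (Rle_dec t (t0 p m)); [reflexivity|].
  destruct (Rle_dec t (t1 p m)); [lra|]. destruct (Rle_dec t (t2 p m)); [|reflexivity].
  replace t with (t2 p m) by lra. ring.
Qed.

Lemma chi_values p m s : (1 <= m)%nat ->
  (s < t0 p m -> chi p m s = 0) /\ (t0 p m <= s < t1 p m -> chi p m s = 2 ^ p) /\
  (t1 p m <= s < t2 p m -> chi p m s = - 2 ^ p) /\ (t2 p m <= s -> chi p m s = 0).
Proof.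
  intros Hm. pose proof (t0_lt_t1_lt_t2 p m). destruct m as [|k]; [lia|]. unfold chi.
  repeat split; intros Hs;
    repeat (destruct Rle_dec || destruct Rlt_dec); (reflexivity || lra).
Qed.

Lemma phi_tent p m t : (1 <= m)%nat -> 0 <= t -> phi p m t = tent p m t.
Proof.
  intros Hm Ht. unfold phi. apply Rint0_is_RInt.
  pose proof (t0_lt_t1_lt_t2 p m). pose proof (t0_ge0 p m Hm). pose proof (t1_midpoint p m).
  assert (Hchi := fun s => chi_values p m s Hm).
  unfold tent. set (a := t0 p m) in *. set (b := t1 p m) in *. set (c := t2 p m) in *.
  assert (I0 : forall u, 0 <= u <= a -> is_RInt (chi p m) 0 u ((u - 0) * 0)).
  { intros u Hu. apply is_RInt_step; [lra|]. intros s Hs. apply (proj1 (Hchi s)); lra. }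
  assert (I1 : forall u, a <= u <= b -> is_RInt (chi p m) a u ((u - a) * 2 ^ p)).
  { intros u Hu. apply is_RInt_step; [lra|]. intros s Hs. apply (proj1 (proj2 (Hchi s))); lra. }
  assert (I2 : forall u, b <= u <= c -> is_RInt (chi p m) b u ((u - b) * - 2 ^ p)).
  { intros u Hu. apply is_RInt_step; [lra|]. intros s Hs. apply (proj1 (proj2 (proj2 (Hchi s)))); lra. }
  assert (I3 : forall u, c <= u -> is_RInt (chi p m) c u ((u - c) * 0)).
  { intros u Hu. apply is_RInt_step; [lra|]. intros s Hs. apply (proj2 (proj2 (proj2 (Hchi s)))); lra. }
  assert (Ib := is_RInt_Rplus _ _ _ _ _ _ (I0 a ltac:(lra)) (I1 b ltac:(lra))).
  assert (Ic := is_RInt_Rplus _ _ _ _ _ _ Ib (I2 c ltac:(lra))).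
  destruct (Rle_dec t a); [|destruct (Rle_dec t b); [|destruct (Rle_dec t c)]].
  - replace 0 with ((t - 0) * 0) at 2 by ring. apply I0; lra.
  - replace (2 ^ p * (t - a)) with ((a - 0) * 0 + (t - a) * 2 ^ p) by ring.
    apply is_RInt_Rplus with a; [apply I0|apply I1]; lra.
  - replace (2 ^ p * (c - t)) with ((a - 0) * 0 + (b - a) * 2 ^ p + (t - b) * - 2 ^ p)
      by (rewrite H1; field).
    apply is_RInt_Rplus with b; [exact Ib|apply I2; lra].
  - replace 0 with ((a - 0) * 0 + (b - a) * 2 ^ p + (c - b) * - 2 ^ p + (t - c) * 0)
      at 2 by (rewrite H1; field).
    apply is_RInt_Rplus with c; [exact Ic|apply I3; lra].
Qed.

Lemma phi_0_0 t : 0 <= t -> phi 0 0 t = t.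
Proof.
  intros Ht. unfold phi. apply Rint0_is_RInt.
  replace t with ((t - 0) * 1) at 2 by ring. apply is_RInt_step; auto.
Qed.

(** * Schauder partial sums interpolate on the dyadic grid *)

Lemma Delta_cell (f : R -> R) p k t : (1 <= p)%nat -> (k < 2 ^ p)%nat ->
  dyad p k <= t <= dyad p (S k) -> Delta f p t = coef f p (S k) * tent p (S k) t.
Proof.
  intros Hp Hk Ht. pose proof (dyad_ge0 p k). unfold Delta.
  rewrite (rsum_eq_single _ _ (S k)); [rewrite phi_tent by (lia || lra); reflexivity|lia|].
  intros j Hj Hne. destruct j as [|j].
  - destruct p; [lia|]. simpl. ring.
  - rewrite phi_tent by (lia || lra). rewrite tent_out; [ring|].
    destruct (Compare_dec.le_lt_dec j k) as [Hjk|Hjk].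
    + right. rewrite t2_dyad, <- dyad_S. apply Rle_trans with (dyad p k); [apply dyad_le; lia|lra].
    + left. rewrite t0_dyad. apply Rle_trans with (dyad p (S k)); [lra|apply dyad_le; lia].
Qed.

Lemma Spre_1 (f : R -> R) t : 0 <= t <= 1 -> Spre f 1 t = f 0 + t * (f 1 - f 0) + coef f 0 1 * tent 0 1 t.
Proof.
  intros Ht. change (Spre f 1 t) with (f 0 + Delta f 0 t). unfold Delta.
  change (S (2 ^ 0)) with 2%nat. rewrite !rsum_S, rsum_0, phi_0_0, phi_tent by (lia || lra).
  simpl coef. ring.
Qed.

Lemma Spre_interpolates (f : R -> R) p k t : (1 <= p)%nat -> (k < 2 ^ p)%nat ->
  dyad p k <= t <= dyad p (S k) -> Spre f p t = f (dyad p k) + (t - dyad p k) * slope f p k.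
Proof.
  intros Hp. destruct p as [|p]; [lia|]. clear Hp. revert k t. unfold slope.
  induction p as [|p IH]; intros k t Hk Ht.
  - assert (X0 : dyad 1 0 = 0) by (unfold dyad; simpl; field).
    assert (X1 : dyad 1 1 = / 2) by (unfold dyad; simpl; field).
    assert (X2 : dyad 1 2 = 1) by (unfold dyad; simpl; field).
    assert (E0 : t0 0 1 = 0) by (unfold t0; simpl; field).
    assert (E1 : t1 0 1 = / 2) by (unfold t1; simpl; field).
    assert (E2 : t2 0 1 = 1) by (unfold t2; simpl; field).
    assert (k = 0 \/ k = 1)%nat as [-> | ->] by (simpl in Hk; lia).
    + rewrite X0, X1 in *. rewrite Spre_1, tent_left by (rewrite ?E0, ?E1; lra).
      unfold coef. rewrite E0, E1, E2. simpl. field.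
    + rewrite X1, X2 in *. rewrite Spre_1, tent_right by (rewrite ?E1, ?E2; lra).
      unfold coef. rewrite E0, E1, E2. simpl. field.
  - assert (Hhalf : forall k0, (2 * k0 <= k)%nat -> (k0 < 2 ^ S p)%nat)
      by (intros; rewrite Nat.pow_succ_r' in Hk; lia).
    change (Spre f (S (S p)) t) with (Spre f (S p) t + Delta f (S p) t).
    destruct (Nat.Even_or_Odd k) as [[k0 ->]|[k0 ->]].
    + rewrite dyad_double in *. rewrite <- (Nat.add_1_r (2 * k0)) in *. rewrite dyad_double_1 in *.
      assert (Ht' : dyad (S p) k0 <= t <= dyad (S p) (S k0)).
      { rewrite dyad_S. pose proof (pow2_pos (S p)).
        assert (/ (2 * 2 ^ S p) <= / 2 ^ S p) by (apply Rinv_le_contravar; lra). lra. }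
      assert (Hk0 := Hhalf k0 ltac:(lia)).
      rewrite (IH k0 t Hk0 Ht'), (Delta_cell _ _ k0) by (lia || lra).
      rewrite tent_left by (rewrite t0_dyad, t1_dyad; lra).
      unfold coef. rewrite t0_dyad, t1_dyad, t2_dyad, dyad_S. simpl. field.
    + rewrite dyad_double_1, dyad_double_2 in *.
      assert (Ht' : dyad (S p) k0 <= t <= dyad (S p) (S k0)).
      { rewrite dyad_S. pose proof (pow2_pos (S p)).
        assert (0 < / (2 * 2 ^ S p)) by (apply Rinv_0_lt_compat; lra). lra. }
      assert (Hk0 := Hhalf k0 ltac:(lia)).
      rewrite (IH k0 t Hk0 Ht'), (Delta_cell _ _ k0) by (lia || lra).
      rewrite tent_right by (rewrite t1_dyad, t2_dyad; rewrite dyad_S in Ht'; lra).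
      unfold coef. rewrite t0_dyad, t1_dyad, t2_dyad, dyad_S. simpl. field. apply pow2_neq0.
Qed.

Lemma deriv_Spre_cell (f : R -> R) p k s : (1 <= p)%nat -> (k < 2 ^ p)%nat ->
  dyad p k < s < dyad p (S k) -> deriv (Spre f p) s = slope f p k.
Proof.
  intros Hp Hk Hs. eapply deriv_affine_on; [exact Hs|].
  intros t Ht. apply Spre_interpolates; auto.
Qed.

Lemma deriv_Spre_0 (f : R -> R) s : deriv (Spre f 0) s = 0.
Proof. apply deriv_of_lim, derivable_pt_lim_const. Qed.

Section CellwiseIntegral.
Variables (q : nat) (g : R -> R) (h F : nat -> R -> R).
Hypothesis g_cell : forall k s, (k < 2 ^ q)%nat -> dyad q k < s < dyad q (S k) -> g s = h k s.
Hypothesis F_primitive : forall k s, (k < 2 ^ q)%nat -> dyad q k <= s <= dyad q (S k) ->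
  is_derive (F k) s (h k s) /\ continuous (h k) s.

Lemma is_RInt_cell k t : (k < 2 ^ q)%nat -> dyad q k <= t <= dyad q (S k) ->
  is_RInt g (dyad q k) t (F k t - F k (dyad q k)).
Proof.
  intros Hk Ht. apply (is_RInt_ext (h k)).
  - rewrite Rmin_left, Rmax_right by lra. intros x Hx. symmetry. apply g_cell; auto. lra.
  - apply (is_RInt_derive (F k) (h k));
      rewrite Rmin_left, Rmax_right by lra; intros x Hx; apply F_primitive; auto; lra.
Qed.

Lemma is_RInt_from_0_cell k : (k < 2 ^ q)%nat -> exists V, forall t,
  dyad q k <= t <= dyad q (S k) -> is_RInt g 0 t (V + (F k t - F k (dyad q k))).
Proof.
  induction k as [|k IH]; intros Hk.
  - exists 0. intros t Ht. rewrite Rplus_0_l.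
    replace 0 with (dyad q 0) at 1 by (unfold dyad; simpl; field; apply pow2_neq0).
    apply is_RInt_cell; auto.
  - destruct (IH ltac:(lia)) as [V HV].
    exists (V + (F k (dyad q (S k)) - F k (dyad q k))). intros t Ht.
    apply is_RInt_Rplus with (dyad q (S k)); [|apply is_RInt_cell; auto].
    apply HV. pose proof (dyad_le q k (S k) ltac:(lia)). lra.
Qed.

Lemma Rint0_cell k t : (k < 2 ^ q)%nat -> dyad q k <= t <= dyad q (S k) ->
  Rint0 g t = Rint0 g (dyad q k) + (F k t - F k (dyad q k)).
Proof.
  intros Hk Ht. destruct (is_RInt_from_0_cell k Hk) as [V HV].
  rewrite (Rint0_is_RInt _ _ _ (HV t Ht)).
  rewrite (Rint0_is_RInt _ _ _ (HV (dyad q k) ltac:(lra))). ring.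
Qed.
End CellwiseIntegral.

(** * The Lévy terms are quadratic on the dyadic cells *)

(* On the cell [k'] of level [p+1], the tent of the parent cell [k'/2] of level [p] is
   affine: [half_tent p k'], with primitive [half_tent_prim p k']. *)
Definition half_tent (p k' : nat) (s : R) : R :=
  if Nat.even k' then 2 ^ p * (s - dyad (S p) k') else 2 ^ p * (dyad (S p) (S k') - s).

Definition half_tent_prim (p k' : nat) (s : R) : R :=
  if Nat.even k' then 2 ^ p / 2 * (s - dyad (S p) k') ^ 2
  else - (2 ^ p / 2) * (dyad (S p) (S k') - s) ^ 2.

Lemma half_tent_prim_derive p k' s : is_derive (half_tent_prim p k') s (half_tent p k' s).
Proof. unfold half_tent_prim, half_tent. destruct (Nat.even k'); auto_derive; auto; field. Qed.

Lemma half_tent_continuous p k' (c : R) s : continuous (fun s => c * half_tent p k' s) s.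
Proof.
  apply (@ex_derive_continuous R_AbsRing R_NormedModule).
  unfold half_tent. destruct (Nat.even k'); auto_derive; auto.
Qed.

Lemma half_cell p k' : (k' < 2 ^ S p)%nat ->
  (Nat.div2 k' < 2 ^ p)%nat /\
  ((Nat.even k' = true /\ dyad (S p) k' = dyad p (Nat.div2 k') /\
      dyad (S p) (S k') = t1 p (S (Nat.div2 k'))) \/
   (Nat.even k' = false /\ dyad (S p) k' = t1 p (S (Nat.div2 k')) /\
      dyad (S p) (S k') = dyad p (S (Nat.div2 k')))).
Proof.
  intros Hk. rewrite Nat.pow_succ_r' in Hk.
  destruct (Nat.Even_or_Odd k') as [[k ->]|[k ->]].
  - rewrite Nat.div2_double, Nat.even_even. split; [lia|].
    left. rewrite dyad_double, t1_dyad, <- dyad_double_1. repeat split. f_equal; lia.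
  - rewrite Nat.div2_odd', Nat.even_odd. split; [lia|].
    right. rewrite dyad_double_1, t1_dyad, dyad_double_2, dyad_S. repeat split.
Qed.

Lemma half_cell_tent p k' s : (k' < 2 ^ S p)%nat -> dyad (S p) k' <= s <= dyad (S p) (S k') ->
  dyad p (Nat.div2 k') <= s <= dyad p (S (Nat.div2 k')) /\
  tent p (S (Nat.div2 k')) s = half_tent p k' s.
Proof.
  intros Hk Hs. pose proof (t0_lt_t1_lt_t2 p (S (Nat.div2 k'))) as Ho.
  rewrite t0_dyad, t2_dyad, <- dyad_S in Ho. unfold half_tent.
  destruct (half_cell p k' Hk) as [_ [[He [E1 E2]]|[He [E1 E2]]]];
    rewrite E1, E2 in Hs; rewrite He.
  - rewrite tent_left by (rewrite t0_dyad; lra). rewrite t0_dyad, E1. split; [lra|reflexivity].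
  - rewrite tent_right by (rewrite t2_dyad, <- dyad_S; lra).
    rewrite t2_dyad, <- dyad_S, E2. split; [lra|reflexivity].
Qed.

Lemma half_cell_open p k' s : (k' < 2 ^ S p)%nat -> dyad (S p) k' < s < dyad (S p) (S k') ->
  dyad p (Nat.div2 k') < s < dyad p (S (Nat.div2 k')).
Proof.
  intros Hk Hs. pose proof (t0_lt_t1_lt_t2 p (S (Nat.div2 k'))) as Ho.
  rewrite t0_dyad, t2_dyad, <- dyad_S in Ho.
  destruct (half_cell p k' Hk) as [_ [[_ [E1 E2]]|[_ [E1 E2]]]]; rewrite E1, E2 in Hs; lra.
Qed.

Definition quadratic_on_cells (p : nat) (T : R -> R) (Q : nat -> R) : Prop :=
  T 0 = 0 /\
  forall k' t, (k' < 2 ^ S p)%nat -> dyad (S p) k' <= t <= dyad (S p) (S k') ->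
    T t = T (dyad (S p) k') + Q (Nat.div2 k') *
            (half_tent_prim p k' t - half_tent_prim p k' (dyad (S p) k')).

Lemma Rint0_quadratic_on_cells (g : R -> R) (Q : nat -> R) p : (1 <= p)%nat ->
  (forall k s, (k < 2 ^ p)%nat -> dyad p k < s < dyad p (S k) -> g s = Q k * tent p (S k) s) ->
  quadratic_on_cells p (Rint0 g) Q.
Proof.
  intros Hp Hg. split; [apply Rint0_0|]. intros k' t Hk Ht. rewrite Rmult_minus_distr_l.
  apply (Rint0_cell (S p) g (fun k s => Q (Nat.div2 k) * half_tent p k s)
           (fun k s => Q (Nat.div2 k) * half_tent_prim p k s)); auto.
  - intros k s Hk1 Hs. rewrite (Hg (Nat.div2 k) s).
    + f_equal. apply half_cell_tent; auto; lra.
    + apply half_cell; auto.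
    + apply half_cell_open; auto.
  - intros k s _ _. split.
    + apply is_derive_scal, half_tent_prim_derive.
    + apply half_tent_continuous.
Qed.

Definition levy_coef d (v : R -> nat -> nat -> R) (w : R -> nat -> R) i p k : R :=
  rsum d (fun j => coef (fun u => v u i j) p (S k) * slope (fun u => w u j) p k)
  - rsum d (fun j => slope (fun u => v u i j) p k * coef (fun u => w u j) p (S k)).

Lemma quadratic_on_cells_minus p T1 T2 Q1 Q2 :
  quadratic_on_cells p T1 Q1 -> quadratic_on_cells p T2 Q2 ->
  quadratic_on_cells p (fun t => T1 t - T2 t) (fun k => Q1 k - Q2 k).
Proof.
  intros [H10 H1] [H20 H2]. split; [rewrite H10, H20; ring|].
  intros k' t Hk Ht. rewrite (H1 k' t), (H2 k' t) by auto. ring.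
Qed.

Lemma levy_term_quadratic d v w i p : (1 <= p)%nat ->
  quadratic_on_cells p (fun t => levy_term d v w p t i) (levy_coef d v w i p).
Proof.
  intros Hp. apply quadratic_on_cells_minus; apply Rint0_quadratic_on_cells; auto;
    intros k s Hk Hs; rewrite <- rsum_mult_r; apply rsum_ext; intros j _;
    rewrite (Delta_cell _ _ k), (deriv_Spre_cell _ _ k) by (auto || lra); ring.
Qed.

Lemma levy_term_0 d v w i t : levy_term d v w 0 t i = 0.
Proof.
  unfold levy_term. rewrite !Rint0_eq0; [ring| |]; intros s; apply rsum_eq0; intros j _;
    rewrite deriv_Spre_0; ring.
Qed.

(** * Bounds for functions that are quadratic on the dyadic cells *)

Definition second_diff (T : R -> R) (r m : nat) : R := 2 * T (t1 r m) - T (t0 r m) - T (t2 r m).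

Lemma half_tent_prim_lipschitz p k' s t :
  dyad (S p) k' <= s <= dyad (S p) (S k') -> dyad (S p) k' <= t <= dyad (S p) (S k') ->
  Rabs (half_tent_prim p k' t - half_tent_prim p k' s) <= / 2 * Rabs (t - s).
Proof.
  intros Hs Ht. pose proof (dyad_S (S p) k'). pose proof (pow2_pos p).
  assert (Hsq : forall e u z, 0 <= u <= / 2 ^ S p -> 0 <= z <= / 2 ^ S p ->
            Rabs (e * u ^ 2 - e * z ^ 2) <= Rabs e * (2 * / 2 ^ S p) * Rabs (u - z)).
  { intros e u z Hu Hz. replace (e * u ^ 2 - e * z ^ 2) with (e * (u + z) * (u - z)) by ring.
    rewrite !Rabs_mult. apply Rmult_le_compat_r; [apply Rabs_pos|].
    apply Rmult_le_compat_l; [apply Rabs_pos|]. rewrite Rabs_right; lra. }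
  assert (Hc : Rabs (2 ^ p / 2) * (2 * / 2 ^ S p) = / 2)
    by (rewrite Rabs_right by lra; simpl; field; lra).
  unfold half_tent_prim. destruct (Nat.even k').
  - eapply Rle_trans; [apply Hsq; lra|]. rewrite Hc. right. f_equal. f_equal. ring.
  - eapply Rle_trans; [apply Hsq; lra|]. rewrite Rabs_Ropp, Hc. right. f_equal.
    rewrite <- Rabs_Ropp. f_equal. ring.
Qed.

Lemma lipschitz_of_cells q (T : R -> R) M : 0 <= M ->
  (forall k s t, (k < 2 ^ q)%nat -> dyad q k <= s <= dyad q (S k) ->
     dyad q k <= t <= dyad q (S k) -> Rabs (T t - T s) <= M * Rabs (t - s)) ->
  forall s t, 0 <= s <= 1 -> 0 <= t <= 1 -> Rabs (T t - T s) <= M * Rabs (t - s).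
Proof.
  intros HM H.
  assert (K : forall k, (k <= 2 ^ q)%nat -> forall s t, 0 <= s <= t -> t <= dyad q k ->
            Rabs (T t - T s) <= M * (t - s)).
  { induction k as [|k IH]; intros Hk s t Hst Htk.
    - unfold dyad in Htk. simpl in Htk. unfold Rdiv in Htk. rewrite Rmult_0_l in Htk.
      replace t with s by lra. rewrite Rminus_diag, Rabs_R0. lra.
    - destruct (Rle_dec t (dyad q k)) as [Ht|Ht]; [apply IH; auto; lia|].
      destruct (Rle_dec (dyad q k) s) as [Hs|Hs].
      + rewrite <- (Rabs_right (t - s)) by lra. apply (H k); [lia|lra|lra].
      + replace (T t - T s) with ((T t - T (dyad q k)) + (T (dyad q k) - T s)) by ring.
        eapply Rle_trans; [apply Rabs_triang|].
        replace (M * (t - s)) with (M * Rabs (t - dyad q k) + M * (dyad q k - s))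
          by (rewrite Rabs_right by lra; ring).
        pose proof (dyad_le q k (S k) ltac:(lia)).
        apply Rplus_le_compat; [apply (H k); lia || lra|apply IH; lia || lra]. }
  intros s t Hs Ht. pose proof (dyad_top q).
  destruct (Rle_dec s t).
  - rewrite (Rabs_right (t - s)) by lra. apply (K (2 ^ q)%nat); auto; lra.
  - rewrite <- Rabs_Ropp, Ropp_minus_distr, <- (Rabs_Ropp (t - s)), Ropp_minus_distr.
    rewrite (Rabs_right (s - t)) by lra. apply (K (2 ^ q)%nat); auto; lra.
Qed.

Lemma cell_containing p r m : (S p <= r)%nat -> (1 <= m <= 2 ^ r)%nat ->
  exists k', (k' < 2 ^ S p)%nat /\ dyad (S p) k' <= t0 r m /\ t2 r m <= dyad (S p) (S k').
Proof.
  intros Hr Hm. set (q := (2 ^ (r - S p))%nat).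
  assert (Hq : (q <> 0)%nat) by (apply Nat.pow_nonzero; lia).
  assert (Er : (2 ^ r = 2 ^ S p * q)%nat) by (unfold q; rewrite <- Nat.pow_add_r; f_equal; lia).
  pose proof (Nat.div_mod (m - 1) q Hq) as Dm. pose proof (Nat.mod_upper_bound (m - 1) q Hq).
  set (k' := ((m - 1) / q)%nat) in *. set (rm := ((m - 1) mod q)%nat) in *.
  exists k'. split.
  { destruct (Nat.lt_ge_cases k' (2 ^ S p)) as [|Hc]; auto. exfalso.
    assert (q * 2 ^ S p <= q * k')%nat by (apply Nat.mul_le_mono_l; auto). lia. }
  assert (Rr : 2 ^ r = 2 ^ S p * INR q).
  { rewrite <- !INR_pow2, <- mult_INR, Er. reflexivity. }
  assert (Pq : 0 < INR q) by (apply lt_0_INR; lia).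
  pose proof (pow2_pos (S p)).
  assert (Im : INR m - 1 = INR k' * INR q + INR rm).
  { rewrite <- mult_INR, <- plus_INR, (Nat.mul_comm k' q), <- Dm, minus_INR by lia.
    simpl. ring. }
  assert (Irm : INR rm + 1 <= INR q) by (rewrite <- S_INR; apply le_INR; lia).
  assert (0 <= INR rm) by apply pos_INR.
  unfold t0, t2, dyad. rewrite Rr, S_INR. unfold Rdiv.
  assert (Hi : 0 <= / (2 ^ S p * INR q))
    by (left; apply Rinv_0_lt_compat, Rmult_lt_0_compat; lra).
  split.
  - replace (INR k' * / 2 ^ S p) with (INR k' * INR q * / (2 ^ S p * INR q)) by (field; lra).
    apply Rmult_le_compat_r; auto. nra.
  - replace ((INR k' + 1) * / 2 ^ S p) with ((INR k' + 1) * INR q * / (2 ^ S p * INR q))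
      by (field; lra).
    apply Rmult_le_compat_r; auto. nra.
Qed.

Section QuadraticBounds.
Variables (p : nat) (T : R -> R) (Q : nat -> R) (B : R).
Hypothesis T_quadratic : quadratic_on_cells p T Q.
Hypothesis Q_bound : forall k, (k < 2 ^ p)%nat -> Rabs (Q k) <= B.
Hypothesis B_ge0 : 0 <= B.

Lemma quadratic_lipschitz s t : 0 <= s <= 1 -> 0 <= t <= 1 ->
  Rabs (T t - T s) <= B / 2 * Rabs (t - s).
Proof.
  apply (lipschitz_of_cells (S p)); [lra|]. intros k' s' t' Hk Hs Ht.
  destruct T_quadratic as [_ H]. rewrite (H k' t'), (H k' s') by auto.
  match goal with |- Rabs ?X <= _ =>
    replace X with (Q (Nat.div2 k') * (half_tent_prim p k' t' - half_tent_prim p k' s')) by ring end.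
  rewrite Rabs_mult. replace (B / 2 * Rabs (t' - s')) with (B * (/ 2 * Rabs (t' - s'))) by field.
  apply Rmult_le_compat; try apply Rabs_pos.
  - apply Q_bound, (half_cell p k' Hk).
  - apply half_tent_prim_lipschitz; auto.
Qed.

Lemma quadratic_bound t : 0 <= t <= 1 -> Rabs (T t) <= B / 2.
Proof.
  intros Ht. destruct T_quadratic as [H0 _]. replace (T t) with (T t - T 0) by (rewrite H0; ring).
  eapply Rle_trans; [apply quadratic_lipschitz; lra|].
  rewrite Rminus_0_r, Rabs_right by lra. nra.
Qed.

Lemma quadratic_second_diff_coarse r m : (1 <= m <= 2 ^ r)%nat ->
  Rabs (second_diff T r m) <= B / 2 * / 2 ^ r.
Proof.
  intros Hm. pose proof (t0_ge0 r m ltac:(lia)). pose proof (t2_le1 r m ltac:(lia)).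
  destruct (t_spacing r m) as [E1 E2]. pose proof (inv_pow2_pos (S r)).
  unfold second_diff.
  replace (2 * T (t1 r m) - T (t0 r m) - T (t2 r m))
    with ((T (t1 r m) - T (t0 r m)) + (T (t1 r m) - T (t2 r m))) by ring.
  eapply Rle_trans; [apply Rabs_triang|].
  eapply Rle_trans; [apply Rplus_le_compat; apply quadratic_lipschitz; lra|].
  rewrite E2, E1. replace (t0 r m + / 2 ^ S r - t0 r m) with (/ 2 ^ S r) by ring.
  replace (t0 r m + / 2 ^ S r - (t0 r m + / 2 ^ S r + / 2 ^ S r)) with (- / 2 ^ S r) by ring.
  rewrite Rabs_Ropp, Rabs_right by lra. simpl. right. field. apply pow2_neq0.
Qed.

(* For [r > p] the three points lie in one cell of level [p+1], where [T] is a quadratic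
   with leading coefficient of size at most [B 2^p / 2]. *)
Lemma quadratic_second_diff_fine r m : (S p <= r)%nat -> (1 <= m <= 2 ^ r)%nat ->
  Rabs (second_diff T r m) <= B * 2 ^ p * (/ 2 ^ S r) ^ 2.
Proof.
  intros Hr Hm. destruct (cell_containing p r m Hr Hm) as [k' [Hk [H0 H2]]].
  destruct (t_spacing r m) as [E1 E2]. pose proof (inv_pow2_pos (S r)).
  destruct T_quadratic as [_ HT]. unfold second_diff.
  rewrite (HT k' (t0 r m)), (HT k' (t1 r m)), (HT k' (t2 r m)) by (auto; lra).
  set (h := / 2 ^ S r) in *. set (a := dyad (S p) k') in *. set (F := half_tent_prim p k').
  match goal with |- Rabs ?X <= _ =>
    replace X with (Q (Nat.div2 k') * (2 * F (t1 r m) - F (t0 r m) - F (t2 r m))) by ring end.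
  assert (Hs : Rabs (2 * F (t1 r m) - F (t0 r m) - F (t2 r m)) = 2 ^ p * h ^ 2).
  { rewrite E2, E1. pose proof (pow2_pos p). pose proof (pow2_ge_0 h).
    unfold F, half_tent_prim. destruct (Nat.even k').
    - match goal with |- Rabs ?X = _ => replace X with (- (2 ^ p * h ^ 2)) by field end.
      rewrite Rabs_Ropp, Rabs_right; [reflexivity|nra].
    - match goal with |- Rabs ?X = _ => replace X with (2 ^ p * h ^ 2) by field end.
      rewrite Rabs_right; [reflexivity|nra]. }
  rewrite Rabs_mult, Hs, Rmult_assoc. apply Rmult_le_compat_r.
  - apply Rmult_le_pos; [left; apply pow2_pos|apply pow2_ge_0].
  - apply Q_bound, (half_cell p k' Hk).
Qed.
End QuadraticBounds.

Lemma slope_double (f : R -> R) p k : slope f (S p) (2 * k) = slope f p k + 2 ^ p * coef f p (S k).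
Proof.
  unfold slope, coef. replace (S (2 * k)) with (2 * k + 1)%nat by lia.
  rewrite dyad_double_1, dyad_double, t0_dyad, t1_dyad, t2_dyad, dyad_S. simpl. ring.
Qed.

Lemma slope_double_1 (f : R -> R) p k :
  slope f (S p) (2 * k + 1) = slope f p k - 2 ^ p * coef f p (S k).
Proof.
  unfold slope, coef. rewrite dyad_double_1, dyad_double_2, t0_dyad, t1_dyad, t2_dyad, dyad_S.
  simpl. ring.
Qed.

Lemma pow_Rdiv x y q : y <> 0 -> (x / y) ^ q = x ^ q / y ^ q.
Proof. intros H. unfold Rdiv. rewrite Rpow_mult_distr, pow_inv. reflexivity. Qed.

(* The slope at level [p] is [f 1 - f 0] plus [p] terms [+- 2^q coef f q _] of size
   [K (2/a)^q]. *)
Lemma slope_sum_bound d (f : nat -> R -> R) (K a : R) : 1 < a < 2 -> 0 <= K ->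
  rsum d (fun j => Rabs (f j 1 - f j 0)) <= K ->
  (forall q m, (1 <= m <= 2 ^ q)%nat -> rsum d (fun j => Rabs (coef (f j) q m)) <= K / a ^ q) ->
  forall p k, (k < 2 ^ p)%nat ->
    rsum d (fun j => Rabs (slope (f j) p k)) <= K * (2 / a) ^ p / (2 / a - 1).
Proof.
  intros Ha HK H0 Hc.
  assert (Hr : 1 < 2 / a < 2).
  { split; apply (Rmult_lt_reg_r a); try lra; unfold Rdiv; rewrite Rmult_assoc, Rinv_l; lra. }
  induction p as [|p IH]; intros k Hk.
  - simpl in Hk. assert (k = 0)%nat as -> by lia.
    assert (E : forall j, slope (f j) 0 0 = f j 1 - f j 0)
      by (intros j; unfold slope, dyad; simpl; rewrite Rdiv_1_r, Rmult_1_l; f_equal; f_equal; lra).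
    rewrite (rsum_ext d _ (fun j => Rabs (f j 1 - f j 0))) by (intros j _; rewrite E; reflexivity).
    simpl. unfold Rdiv. rewrite Rmult_1_r. eapply Rle_trans; [exact H0|].
    rewrite <- (Rmult_1_r K) at 1. apply Rmult_le_compat_l; auto.
    rewrite <- Rinv_1. apply Rinv_le_contravar; lra.
  - assert (Hcoef : forall k, (k < 2 ^ p)%nat ->
              rsum d (fun j => Rabs (2 ^ p * coef (f j) p (S k))) <= K * (2 / a) ^ p).
    { intros k0 Hk0. rewrite pow_Rdiv by lra.
      replace (K * (2 ^ p / a ^ p)) with (K / a ^ p * 2 ^ p) by (field; apply pow_nonzero; lra).
      rewrite (rsum_ext d _ (fun j => Rabs (coef (f j) p (S k0)) * 2 ^ p))
        by (intros j _; rewrite Rabs_mult, Rabs_right by (left; apply pow2_pos); ring).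
      rewrite rsum_mult_r. apply Rmult_le_compat_r; [left; apply pow2_pos|apply Hc; lia]. }
    assert (Hk2 : (Nat.div2 k < 2 ^ p)%nat).
    { rewrite Nat.pow_succ_r' in Hk.
      destruct (Nat.Even_or_Odd k) as [[k0 ->]|[k0 ->]];
        [rewrite Nat.div2_double|rewrite Nat.div2_odd']; lia. }
    assert (E : forall j, Rabs (slope (f j) (S p) k) <=
              Rabs (slope (f j) p (Nat.div2 k)) + Rabs (2 ^ p * coef (f j) p (S (Nat.div2 k)))).
    { intros j. destruct (Nat.Even_or_Odd k) as [[k0 ->]|[k0 ->]].
      - rewrite Nat.div2_double, slope_double. apply Rabs_triang.
      - rewrite Nat.div2_odd', slope_double_1. unfold Rminus.
        rewrite <- (Rabs_Ropp (2 ^ p * _)). apply Rabs_triang. }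
    eapply Rle_trans; [apply rsum_le; intros j _; apply E|]. rewrite rsum_plus.
    eapply Rle_trans; [apply Rplus_le_compat; [apply IH|apply Hcoef]; auto|].
    right. simpl. field. lra.
Qed.

(** * Geometrically dominated series *)

Section GeometricallyDominated.
Variables (a : nat -> R) (c th : R).
Hypothesis c_ge0 : 0 <= c.
Hypothesis th_range : 0 <= th < 1.
Hypothesis a_bound : forall p, Rabs (a p) <= c * th ^ p.

Lemma rsum_tail_le N M : (N <= M)%nat -> Rabs (rsum M a - rsum N a) <= c * th ^ N / (1 - th).
Proof.
  intros H. replace M with (N + (M - N))%nat by lia.
  assert (Hj : forall j, Rabs (rsum (N + j) a - rsum N a) <= c * th ^ N * (1 - th ^ j) / (1 - th)).
  { induction j as [|j IH].
    - rewrite Nat.add_0_r, Rminus_diag, Rabs_R0. simpl. right. field. lra.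
    - rewrite Nat.add_succ_r, rsum_S.
      replace (rsum (N + j) a + a (N + j)%nat - rsum N a)
        with ((rsum (N + j) a - rsum N a) + a (N + j)%nat) by ring.
      eapply Rle_trans; [apply Rabs_triang|].
      eapply Rle_trans; [apply Rplus_le_compat; [apply IH|apply a_bound]|].
      rewrite pow_add. right. simpl. field; lra. }
  eapply Rle_trans; [apply Hj|]. unfold Rdiv. rewrite !Rmult_assoc.
  apply Rmult_le_compat_l; auto. apply Rmult_le_compat_l; [apply pow_le; lra|].
  pose proof (Rinv_0_lt_compat (1 - th) ltac:(lra)). pose proof (pow_le th (M - N) ltac:(lra)).
  nra.
Qed.

Lemma rsum_geometrically_dominated_cv : exists l, Un_cv (fun N => rsum N a) l.
Proof.
  assert (Hc : Cauchy_crit (fun N => rsum N a)); [|destruct (Rcomplete.R_complete _ Hc); eauto].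
  intros eps He.
  destruct (pow_lt_1_zero th ltac:(rewrite Rabs_right; lra) (eps * (1 - th) / (2 * (c + 1))))
    as [N0 HN0].
  { apply Rdiv_lt_0_compat; [apply Rmult_lt_0_compat|]; lra. }
  specialize (HN0 N0 (le_n _)). rewrite Rabs_right in HN0 by (apply Rle_ge, pow_le; lra).
  assert (Htail : forall M, (N0 <= M)%nat -> Rabs (rsum M a - rsum N0 a) < eps / 2).
  { intros M HM. eapply Rle_lt_trans; [apply rsum_tail_le; auto|].
    apply (Rmult_lt_reg_r (2 * (c + 1) * (1 - th))); [nra|].
    replace (c * th ^ N0 / (1 - th) * (2 * (c + 1) * (1 - th)))
      with (c * (th ^ N0 * (2 * (c + 1)))) by (field; lra).
    replace (eps / 2 * (2 * (c + 1) * (1 - th))) with ((c + 1) * (eps * (1 - th))) by field.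
    assert (th ^ N0 * (2 * (c + 1)) < eps * (1 - th)).
    { apply (Rmult_lt_reg_r (/ (2 * (c + 1)))); [apply Rinv_0_lt_compat; lra|].
      rewrite Rmult_assoc, Rinv_r, Rmult_1_r by lra. exact HN0. }
    pose proof (pow_le th N0 ltac:(lra)). nra. }
  exists N0. intros m n Hm Hn. unfold Rdist.
  replace (rsum m a - rsum n a) with ((rsum m a - rsum N0 a) - (rsum n a - rsum N0 a)) by ring.
  eapply Rle_lt_trans; [apply Rabs_triang|]. rewrite Rabs_Ropp.
  pose proof (Htail m Hm). pose proof (Htail n Hn). lra.
Qed.

Lemma rsum_geometrically_dominated_rate l : Un_cv (fun N => rsum N a) l ->
  forall N, Rabs (rsum N a - l) <= c * th ^ N / (1 - th).
Proof.
  intros Hl N. apply Rnot_lt_le. intros Hlt.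
  destruct (Hl (Rabs (rsum N a - l) - c * th ^ N / (1 - th)) ltac:(lra)) as [M HM].
  specialize (HM (Nat.max M N) (Nat.le_max_l _ _)). unfold Rdist in HM.
  pose proof (rsum_tail_le N (Nat.max M N) (Nat.le_max_r _ _)) as Ht.
  pose proof (Rabs_triang (rsum N a - rsum (Nat.max M N) a) (rsum (Nat.max M N) a - l)) as Tr.
  replace (rsum N a - rsum (Nat.max M N) a + (rsum (Nat.max M N) a - l))
    with (rsum N a - l) in Tr by ring.
  rewrite (Rabs_minus_sym (rsum N a) (rsum (Nat.max M N) a)) in Tr. lra.
Qed.
End GeometricallyDominated.

Lemma Rabs_lim_le u l K : Un_cv u l -> (forall N, Rabs (u N) <= K) -> Rabs l <= K.
Proof.
  intros Hl H. apply (@Rle_cv_lim (fun N => Rabs (u N)) (fun _ => K) _ _ H).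
  - apply cv_cvabs, Hl.
  - intros e He. exists 0%nat. intros. unfold Rdist. rewrite Rminus_diag, Rabs_R0. lra.
Qed.

Lemma Un_cv_second_diff u0 u1 u2 l0 l1 l2 : Un_cv u0 l0 -> Un_cv u1 l1 -> Un_cv u2 l2 ->
  Un_cv (fun N => 2 * u1 N - u0 N - u2 N) (2 * l1 - l0 - l2).
Proof.
  intros H0 H1 H2. apply CV_minus; auto. apply CV_minus; auto.
  replace (2 * l1) with (l1 + l1) by ring.
  apply (Un_cv_ext (fun N => u1 N + u1 N)); [intros; ring|]. apply CV_plus; auto.
Qed.

Lemma rsum_pow_below Y r N : Y <> 1 ->
  rsum N (fun p => if (p <? r)%nat then Y ^ p else 0) = (Y ^ Nat.min N r - 1) / (Y - 1).
Proof.
  intros HY. assert (Y - 1 <> 0) by lra.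
  induction N as [|N IH]; [rewrite rsum_0; simpl; field; auto|].
  rewrite rsum_S, IH. destruct (Nat.ltb_spec N r).
  - rewrite !Nat.min_l by lia. simpl. field; auto.
  - rewrite !Nat.min_r by lia. ring.
Qed.

Lemma rsum_pow_from th r N : th <> 1 ->
  rsum N (fun p => if (p <? r)%nat then 0 else th ^ p) = (th ^ r - th ^ Nat.max N r) / (1 - th).
Proof.
  intros Ht. assert (1 - th <> 0) by lra.
  induction N as [|N IH]; [rewrite rsum_0; simpl; field; auto|].
  rewrite rsum_S, IH. destruct (Nat.ltb_spec N r).
  - rewrite !Nat.max_r by lia. ring.
  - rewrite !Nat.max_l by lia. simpl. field; auto.
Qed.

Lemma rsum_geometric_le th N : 0 <= th < 1 -> rsum N (fun p => th ^ p) <= 1 / (1 - th).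
Proof.
  intros Ht. rewrite (rsum_ext N _ (fun p => if (p <? 0)%nat then 0 else th ^ p))
    by (intros; reflexivity).
  rewrite rsum_pow_from by lra. pose proof (pow_le th (Nat.max N 0) ltac:(lra)).
  unfold Rdiv. apply Rmult_le_compat_r; [left; apply Rinv_0_lt_compat|simpl]; lra.
Qed.

Lemma rsum_split_geometric_le (G Y th : R) (r N : nat) (A B : R) :
  Y > 1 -> 0 <= th < 1 -> 0 <= G -> 0 <= A -> 0 <= B ->
  rsum N (fun p => if (p <? r)%nat then G * Y ^ p * A else G * th ^ p * B)
  <= G * Y ^ r / (Y - 1) * A + G * th ^ r / (1 - th) * B.
Proof.
  intros HY Ht HG HA HB.
  rewrite (rsum_ext N _ (fun p => (if (p <? r)%nat then Y ^ p else 0) * (G * A)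
                                  + (if (p <? r)%nat then 0 else th ^ p) * (G * B)))
    by (intros j _; destruct (j <? r)%nat; ring).
  rewrite rsum_plus, !rsum_mult_r, rsum_pow_below, rsum_pow_from by lra.
  pose proof (Rle_pow Y (Nat.min N r) r ltac:(lra) (Nat.le_min_r _ _)).
  pose proof (pow_le th (Nat.max N r) ltac:(lra)).
  pose proof (Rinv_0_lt_compat (Y - 1) ltac:(lra)).
  pose proof (Rinv_0_lt_compat (1 - th) ltac:(lra)).
  unfold Rdiv. apply Rplus_le_compat.
  - replace (G * Y ^ r * / (Y - 1) * A) with (Y ^ r * / (Y - 1) * (G * A)) by ring.
    apply Rmult_le_compat_r; [nra|]. apply Rmult_le_compat_r; lra.
  - replace (G * th ^ r * / (1 - th) * B) with (th ^ r * / (1 - th) * (G * B)) by ring.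
    apply Rmult_le_compat_r; [nra|]. apply Rmult_le_compat_r; lra.
Qed.

Definition two_pow (x : R) : R := Rpower 2 x.

Lemma two_pow_pos x : 0 < two_pow x.
Proof. apply exp_pos. Qed.

Lemma Rpower_2_INR_mult q x : Rpower 2 (INR q * x) = two_pow x ^ q.
Proof. unfold two_pow. rewrite Rmult_comm, <- Rpower_mult, Rpower_pow; auto. apply exp_pos. Qed.

Lemma two_pow_bounds x : 0 < x < 1 -> 1 < two_pow x < 2.
Proof.
  intros H. unfold two_pow.
  pose proof (Rpower_lt 2 0 x ltac:(lra) ltac:(lra)). pose proof (Rpower_lt 2 x 1 ltac:(lra) ltac:(lra)).
  rewrite Rpower_O in * by lra. rewrite Rpower_1 in * by lra. lra.
Qed.

Lemma two_pow_plus_bounds x y : 1 < x + y < 2 -> 2 < two_pow x * two_pow y < 4.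
Proof.
  intros H. unfold two_pow. rewrite <- Rpower_plus.
  assert (E4 : Rpower 2 2 = 4).
  { replace 2 with (INR 2) at 2 by (simpl; lra). rewrite Rpower_pow by lra. simpl; ring. }
  pose proof (Rpower_lt 2 1 (x + y) ltac:(lra) ltac:(lra)).
  pose proof (Rpower_lt 2 (x + y) 2 ltac:(lra) ltac:(lra)). rewrite Rpower_1 in * by lra. lra.
Qed.

Definition levy_area d v w (t : R) (i : nat) : R :=
  epsilon (inhabits 0) (fun l => Un_cv (fun N => levy_partial d v w N t i) l).

Lemma two_div_two_pow_sub1_pos x : 0 < x < 1 -> 0 < 2 / two_pow x - 1.
Proof.
  intros H. pose proof (two_pow_bounds x H). assert (0 < 2 / two_pow x) by (apply Rdiv_lt_0_compat; lra).
  assert (2 / two_pow x * two_pow x = 2) by (field; lra). nra.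
Qed.

Lemma le_div_pow x K y q : 0 < y -> y ^ q * x <= K -> x <= K / y ^ q.
Proof.
  intros Hy H. pose proof (pow_lt y q Hy). apply (Rmult_le_reg_l (y ^ q)); auto.
  unfold Rdiv. rewrite <- Rmult_assoc, (Rmult_comm (y ^ q) K), Rmult_assoc, Rinv_r, Rmult_1_r; lra.
Qed.

Section LevyArea.
Variables (al be : R).
Hypothesis Ha : 0 < al < 1.
Hypothesis Hb : 0 < be < 1.
Hypothesis Hab : al + be > 1.

(* [theta = 2^(1 - alpha - beta)] is the decay rate of the Lévy terms. *)
Definition theta : R := 2 / (two_pow al * two_pow be).

Definition term_const : R := 1 / (2 / two_pow be - 1) + 1 / (2 / two_pow al - 1).

Definition coef_const : R := 1 / (4 * (2 * theta - 1)) + 1 / (2 * (1 - theta)).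

Definition levy_const : R := term_const * coef_const.

Lemma two_pow_prod_bounds : 2 < two_pow al * two_pow be < 4.
Proof. apply two_pow_plus_bounds; lra. Qed.

Lemma theta_bounds : 1 / 2 < theta < 1.
Proof.
  pose proof two_pow_prod_bounds. unfold theta. set (P := two_pow al * two_pow be) in *.
  assert (0 < 2 / P) by (apply Rdiv_lt_0_compat; lra).
  assert (2 / P * P = 2) by (field; lra). nra.
Qed.

Lemma theta_range : 0 <= theta < 1.
Proof. pose proof theta_bounds. lra. Qed.

Lemma term_const_pos : 0 < term_const.
Proof.
  unfold term_const. pose proof (two_div_two_pow_sub1_pos al Ha). pose proof (two_div_two_pow_sub1_pos be Hb).
  assert (0 < 1 / (2 / two_pow be - 1)) by (apply Rdiv_lt_0_compat; lra).
  assert (0 < 1 / (2 / two_pow al - 1)) by (apply Rdiv_lt_0_compat; lra). lra.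
Qed.

Lemma coef_const_pos : 0 < coef_const.
Proof.
  unfold coef_const. pose proof theta_bounds.
  assert (0 < 1 / (4 * (2 * theta - 1))) by (apply Rdiv_lt_0_compat; lra).
  assert (0 < 1 / (2 * (1 - theta))) by (apply Rdiv_lt_0_compat; lra). lra.
Qed.

Lemma levy_const_ge0 : 0 <= levy_const.
Proof. unfold levy_const. pose proof term_const_pos. pose proof coef_const_pos. nra. Qed.

Section Bounds.
Variables (d n : nat) (v : R -> nat -> nat -> R) (w : R -> nat -> R) (Kv Kw : R).
Hypothesis Hv : CalphaM n d al v Kv.
Hypothesis Hw : CalphaV d be w Kw.

Lemma Kv_ge0 : 0 <= Kv.
Proof.
  destruct Hv as [_ [H _]]. pose proof (mnorm_ge0 n d (v 0)). pose proof (exp_pos (- al * ln 2)).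
  unfold Rpower in H. nra.
Qed.

Lemma Kw_ge0 : 0 <= Kw.
Proof.
  destruct Hw as [_ [H _]]. pose proof (vnorm_ge0 d (w 0)). pose proof (exp_pos (- be * ln 2)).
  unfold Rpower in H. nra.
Qed.

Lemma v_coef_bound i q m : (i < n)%nat -> (m <= 2 ^ q)%nat ->
  rsum d (fun j => Rabs (coef (fun u => v u i j) q m)) <= Kv / two_pow al ^ q.
Proof.
  intros Hi Hm. destruct Hv as [_ [_ H]]. specialize (H q m Hm). rewrite Rpower_2_INR_mult in H.
  apply le_div_pow; [apply two_pow_pos|]. eapply Rle_trans; [|exact H].
  apply Rmult_le_compat_l; [left; apply pow_lt, two_pow_pos|].
  apply (row_sum_le_mnorm n d (fun i j => coef (fun u => v u i j) q m) i Hi).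
Qed.

Lemma w_coef_bound j q m : (j < d)%nat -> (m <= 2 ^ q)%nat ->
  Rabs (coef (fun u => w u j) q m) <= Kw / two_pow be ^ q.
Proof.
  intros Hj Hm. destruct Hw as [_ [_ H]]. specialize (H q m Hm). rewrite Rpower_2_INR_mult in H.
  apply le_div_pow; [apply two_pow_pos|]. eapply Rle_trans; [|exact H].
  apply Rmult_le_compat_l; [left; apply pow_lt, two_pow_pos|].
  apply (Rabs_le_vnorm d (fun j => coef (fun u => w u j) q m) j Hj).
Qed.

Lemma w_slope_bound j p k : (j < d)%nat -> (k < 2 ^ p)%nat ->
  Rabs (slope (fun u => w u j) p k) <= Kw * (2 / two_pow be) ^ p / (2 / two_pow be - 1).
Proof.
  intros Hj Hk. rewrite <- (rsum_1 (fun _ => Rabs (slope (fun u => w u j) p k))).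
  apply (slope_sum_bound 1 (fun _ u => w u j) Kw _ (two_pow_bounds be Hb) Kw_ge0); auto.
  - rewrite rsum_1. pose proof (w_coef_bound j 0 0 Hj ltac:(simpl; lia)) as H.
    rewrite pow_O, Rdiv_1_r in H. exact H.
  - intros q m Hm. rewrite rsum_1. apply w_coef_bound; auto; lia.
Qed.

Lemma v_slope_bound i p k : (i < n)%nat -> (k < 2 ^ p)%nat ->
  rsum d (fun j => Rabs (slope (fun u => v u i j) p k))
  <= Kv * (2 / two_pow al) ^ p / (2 / two_pow al - 1).
Proof.
  intros Hi Hk. apply (slope_sum_bound d (fun j u => v u i j) Kv _ (two_pow_bounds al Ha) Kv_ge0); auto.
  - pose proof (v_coef_bound i 0 0 Hi ltac:(simpl; lia)) as H.
    rewrite pow_O, Rdiv_1_r in H. exact H.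
  - intros q m Hm. apply v_coef_bound; auto; lia.
Qed.

Definition term_scale : R := Kv * Kw * term_const.

Definition term_bound (p : nat) : R := term_scale * theta ^ p.

Lemma term_scale_ge0 : 0 <= term_scale.
Proof.
  unfold term_scale. pose proof Kv_ge0. pose proof Kw_ge0. pose proof term_const_pos.
  apply Rmult_le_pos; [nra|lra].
Qed.

Lemma term_scale_half_ge0 : 0 <= term_scale / 2.
Proof. pose proof term_scale_ge0. lra. Qed.

Lemma term_bound_ge0 p : 0 <= term_bound p.
Proof.
  apply Rmult_le_pos; [apply term_scale_ge0|apply pow_le]. pose proof theta_bounds; lra.
Qed.

Lemma levy_coef_bound i p k : (i < n)%nat -> (k < 2 ^ p)%nat ->
  Rabs (levy_coef d v w i p k) <= term_bound p.
Proof.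
  intros Hi Hk. pose proof (two_div_two_pow_sub1_pos al Ha). pose proof (two_div_two_pow_sub1_pos be Hb).
  pose proof (two_pow_bounds al Ha). pose proof (two_pow_bounds be Hb).
  set (Sw := Kw * (2 / two_pow be) ^ p / (2 / two_pow be - 1)).
  set (Sv := Kv * (2 / two_pow al) ^ p / (2 / two_pow al - 1)).
  assert (Sw_ge0 : 0 <= Sw).
  { unfold Sw. pose proof Kw_ge0. pose proof (pow_le (2 / two_pow be) p ltac:(lra)).
    apply Rmult_le_pos; [nra|left; apply Rinv_0_lt_compat; lra]. }
  assert (B1 : Rabs (rsum d (fun j => coef (fun u => v u i j) p (S k) * slope (fun u => w u j) p k))
               <= Kv / two_pow al ^ p * Sw).
  { eapply Rle_trans; [apply rsum_abs_mult_le; intros j Hj; apply w_slope_bound; auto|].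
    apply Rmult_le_compat_r; [exact Sw_ge0|apply v_coef_bound; auto]. }
  assert (B2 : Rabs (rsum d (fun j => slope (fun u => v u i j) p k * coef (fun u => w u j) p (S k)))
               <= Sv * (Kw / two_pow be ^ p)).
  { eapply Rle_trans; [apply rsum_abs_mult_le; intros j Hj; apply w_coef_bound; auto; lia|].
    apply Rmult_le_compat_r; [|apply v_slope_bound; auto]. pose proof Kw_ge0.
    pose proof (pow_lt _ p (two_pow_pos be)). unfold Rdiv.
    apply Rmult_le_pos; [lra|left; apply Rinv_0_lt_compat; lra]. }
  unfold levy_coef. eapply Rle_trans; [apply Rabs_triang|]. rewrite Rabs_Ropp.
  eapply Rle_trans; [apply Rplus_le_compat; [exact B1|exact B2]|]. right.
  unfold Sw, Sv, term_bound, term_scale, term_const, theta.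
  rewrite !pow_Rdiv by (try apply Rmult_integral_contrapositive; lra). rewrite Rpow_mult_distr.
  field. repeat split; try lra; apply pow_nonzero; lra.
Qed.

Lemma levy_term_quadratic_bounded i p : (i < n)%nat ->
  exists Q, quadratic_on_cells p (fun t => levy_term d v w p t i) Q /\
            forall k, (k < 2 ^ p)%nat -> Rabs (Q k) <= term_bound p.
Proof.
  intros Hi. destruct p as [|p].
  - exists (fun _ => 0). split.
    + split; [apply levy_term_0|]. intros. rewrite !levy_term_0. ring.
    + intros. rewrite Rabs_R0. apply term_bound_ge0.
  - exists (levy_coef d v w i (S p)). split.
    + apply levy_term_quadratic. lia.
    + intros k Hk. apply levy_coef_bound; auto.
Qed.

Section Component.
Variables (i : nat).
Hypothesis Hi : (i < n)%nat.

Let T p t := levy_term d v w p t i.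
Let L t := levy_area d v w t i.

Lemma levy_term_abs_le p t : 0 <= t <= 1 -> Rabs (T p t) <= term_scale / 2 * theta ^ p.
Proof.
  intros Ht. destruct (levy_term_quadratic_bounded i p Hi) as [Q [HT HQ]].
  replace (term_scale / 2 * theta ^ p) with (term_bound p / 2) by (unfold term_bound; field).
  eapply quadratic_bound; eauto. apply term_bound_ge0.
Qed.

Lemma levy_term_lipschitz p s t : 0 <= s <= 1 -> 0 <= t <= 1 ->
  Rabs (T p t - T p s) <= theta ^ p * (term_scale / 2 * Rabs (t - s)).
Proof.
  intros Hs Ht. destruct (levy_term_quadratic_bounded i p Hi) as [Q [HT HQ]].
  replace (theta ^ p * (term_scale / 2 * Rabs (t - s))) with (term_bound p / 2 * Rabs (t - s))
    by (unfold term_bound; field).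
  eapply quadratic_lipschitz; eauto. apply term_bound_ge0.
Qed.

Lemma levy_term_second_diff_coarse p r m : (1 <= m <= 2 ^ r)%nat ->
  Rabs (second_diff (T p) r m) <= term_bound p / 2 * / 2 ^ r.
Proof.
  intros Hm. destruct (levy_term_quadratic_bounded i p Hi) as [Q [HT HQ]].
  eapply quadratic_second_diff_coarse; eauto. apply term_bound_ge0.
Qed.

Lemma levy_term_second_diff_fine p r m : (S p <= r)%nat -> (1 <= m <= 2 ^ r)%nat ->
  Rabs (second_diff (T p) r m) <= term_bound p * 2 ^ p * (/ 2 ^ S r) ^ 2.
Proof.
  intros Hr Hm. destruct (levy_term_quadratic_bounded i p Hi) as [Q [HT HQ]].
  eapply quadratic_second_diff_fine; eauto.
Qed.

Lemma levy_area_cv t : 0 <= t <= 1 -> Un_cv (fun N => rsum N (fun p => T p t)) (L t).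
Proof.
  intros Ht. unfold L, levy_area. apply epsilon_spec.
  apply (rsum_geometrically_dominated_cv _ _ _ term_scale_half_ge0 theta_range).
  intros p. apply levy_term_abs_le, Ht.
Qed.

Lemma levy_partial_rate N t : 0 <= t <= 1 ->
  Rabs (levy_partial d v w N t i - L t) <= term_scale / 2 * theta ^ N / (1 - theta).
Proof.
  intros Ht. apply (rsum_geometrically_dominated_rate (fun p => T p t) _ _
                      term_scale_half_ge0 theta_range).
  - intros p. apply levy_term_abs_le, Ht.
  - apply levy_area_cv, Ht.
Qed.

Lemma levy_area_lipschitz s t : 0 <= s <= 1 -> 0 <= t <= 1 ->
  Rabs (L t - L s) <= term_scale / 2 / (1 - theta) * Rabs (t - s).
Proof.
  intros Hs Ht. pose proof theta_range. pose proof term_scale_half_ge0.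
  apply (Rabs_lim_le (fun N => rsum N (fun p => T p t) - rsum N (fun p => T p s))).
  - apply CV_minus; apply levy_area_cv; auto.
  - intros N. rewrite <- rsum_minus. eapply Rle_trans; [apply rsum_abs_le|].
    eapply Rle_trans;
      [apply (rsum_le N _ (fun p => theta ^ p * (term_scale / 2 * Rabs (t - s))));
       intros p _; apply levy_term_lipschitz; auto|].
    rewrite rsum_mult_r. pose proof (rsum_geometric_le theta N ltac:(lra)).
    pose proof (Rabs_pos (t - s)).
    replace (term_scale / 2 / (1 - theta) * Rabs (t - s))
      with (1 / (1 - theta) * (term_scale / 2 * Rabs (t - s))) by (field; lra).
    apply Rmult_le_compat_r; [nra|auto].
Qed.

Lemma levy_area_cont : cont01 L.
Proof.
  intros t Ht eps He. pose proof theta_range. pose proof term_scale_half_ge0.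
  set (Lam := term_scale / 2 / (1 - theta)).
  assert (HL : 0 <= Lam) by (apply Rmult_le_pos; [lra|left; apply Rinv_0_lt_compat; lra]).
  exists (eps / (Lam + 1)). split; [apply Rdiv_lt_0_compat; lra|].
  intros s Hs Hst. eapply Rle_lt_trans; [apply levy_area_lipschitz; auto|]. fold Lam.
  assert (0 < eps / (Lam + 1)) by (apply Rdiv_lt_0_compat; lra).
  assert (Lam * (eps / (Lam + 1)) = eps - eps / (Lam + 1)) by (field; lra). nra.
Qed.

Lemma levy_area_0 : L 0 = 0.
Proof.
  apply Rabs_eq_0, Rle_antisym; [|apply Rabs_pos].
  apply (Rabs_lim_le _ _ 0 (levy_area_cv 0 ltac:(lra))). intros N.
  rewrite rsum_eq0; [rewrite Rabs_R0; lra|]. intros p _.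
  destruct (levy_term_quadratic_bounded i p Hi) as [Q [[H0 _] _]]. exact H0.
Qed.

Lemma levy_area_second_diff r m : (1 <= m <= 2 ^ r)%nat ->
  Rabs (second_diff L r m) <= term_scale * coef_const / (two_pow al * two_pow be) ^ r.
Proof.
  intros Hm. pose proof (t0_ge0 r m ltac:(lia)). pose proof (t2_le1 r m ltac:(lia)).
  pose proof (t0_lt_t1_lt_t2 r m). pose proof theta_bounds. pose proof term_scale_ge0.
  pose proof two_pow_prod_bounds.
  apply (Rabs_lim_le (fun N => second_diff (fun t => rsum N (fun p => T p t)) r m)).
  - apply Un_cv_second_diff; apply levy_area_cv; lra.
  - intros N. unfold second_diff. rewrite <- rsum_second_difference.
    eapply Rle_trans; [apply rsum_abs_le|].
    set (A := (/ 2 ^ S r) ^ 2). set (B := / 2 * / 2 ^ r).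
    assert (HA : 0 <= A) by apply pow2_ge_0.
    assert (HB : 0 <= B) by (pose proof (inv_pow2_pos r); unfold B; lra).
    eapply Rle_trans; [apply (rsum_le N _ (fun p => if (p <? r)%nat
                         then term_scale * (2 * theta) ^ p * A else term_scale * theta ^ p * B))|].
    + intros p _. destruct (Nat.ltb_spec p r).
      * eapply Rle_trans; [apply levy_term_second_diff_fine; auto|].
        right. unfold term_bound, A. rewrite Rpow_mult_distr. ring.
      * eapply Rle_trans; [apply levy_term_second_diff_coarse; auto|].
        right. unfold term_bound, B. field. apply pow2_neq0.
    + eapply Rle_trans; [apply rsum_split_geometric_le; auto; lra|]. right.
      unfold coef_const, theta, A, B. set (P := two_pow al * two_pow be) in *.
      pose proof (pow2_pos r). pose proof (pow_lt P r ltac:(lra)).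
      rewrite (Rpow_mult_distr 2 (2 / P)), !pow_Rdiv by lra. simpl (2 ^ S r). field. lra.
Qed.

Lemma levy_area_increment : Rabs (L 1 - L 0) <= term_scale * coef_const.
Proof.
  eapply Rle_trans; [apply levy_area_lipschitz; lra|].
  rewrite Rminus_0_r, Rabs_R1, Rmult_1_r.
  pose proof theta_bounds. pose proof term_scale_ge0. unfold coef_const.
  assert (0 <= 1 / (4 * (2 * theta - 1)))
    by (unfold Rdiv; apply Rmult_le_pos; [lra|left; apply Rinv_0_lt_compat; lra]).
  replace (term_scale / 2 / (1 - theta)) with (term_scale * (1 / (2 * (1 - theta))))
    by (field; lra). nra.
Qed.
End Component.

Lemma levy_area_converges : levy_converges_to n d v w (levy_area d v w).
Proof.
  intros eps He. pose proof theta_range. pose proof term_scale_half_ge0.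
  set (c := term_scale / 2) in *.
  destruct (pow_lt_1_zero theta ltac:(rewrite Rabs_right; lra) (eps * (1 - theta) / (c + 1)))
    as [N0 HN0].
  { apply Rdiv_lt_0_compat; [apply Rmult_lt_0_compat|]; lra. }
  exists N0. intros N HN t Ht i Hi.
  eapply Rle_lt_trans; [apply levy_partial_rate; auto|]. fold c.
  specialize (HN0 N HN). rewrite Rabs_right in HN0 by (apply Rle_ge, pow_le; lra).
  pose proof (pow_le theta N ltac:(lra)).
  apply (Rmult_lt_reg_r ((1 - theta) * (c + 1))); [nra|].
  replace (c * theta ^ N / (1 - theta) * ((1 - theta) * (c + 1)))
    with (c * (theta ^ N * (c + 1))) by (field; lra).
  assert (theta ^ N * (c + 1) < eps * (1 - theta)).
  { apply (Rmult_lt_reg_r (/ (c + 1))); [apply Rinv_0_lt_compat; lra|].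
    rewrite Rmult_assoc, Rinv_r, Rmult_1_r by lra. exact HN0. }
  nra.
Qed.

Lemma levy_area_holder : CalphaV n (al + be) (levy_area d v w) (levy_const * Kv * Kw).
Proof.
  pose proof term_scale_ge0. pose proof coef_const_pos. pose proof two_pow_prod_bounds.
  assert (EC : levy_const * Kv * Kw = term_scale * coef_const)
    by (unfold levy_const, term_scale; ring).
  assert (HK : 0 <= term_scale * coef_const) by nra.
  split; [intros i Hi; apply levy_area_cont; auto|]. rewrite EC. split.
  - assert (Hnorm0 : vnorm n (levy_area d v w 0) <= 0).
    { apply vnorm_le; [lra|]. intros i Hi. rewrite levy_area_0, Rabs_R0 by auto. lra. }
    pose proof (vnorm_ge0 n (levy_area d v w 0)). pose proof (exp_pos (- (al + be) * ln 2)).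
    unfold Rpower. nra.
  - intros r m Hm. rewrite Rpower_2_INR_mult.
    replace (two_pow (al + be)) with (two_pow al * two_pow be)
      by (unfold two_pow; rewrite Rpower_plus; reflexivity).
    pose proof (pow_lt (two_pow al * two_pow be) r ltac:(lra)).
    apply Rle_trans with ((two_pow al * two_pow be) ^ r *
                          (term_scale * coef_const / (two_pow al * two_pow be) ^ r));
      [|right; field; lra].
    apply Rmult_le_compat_l; [lra|]. apply vnorm_le.
    { unfold Rdiv. apply Rmult_le_pos; [lra|left; apply Rinv_0_lt_compat; lra]. }
    intros i Hi. destruct m as [|k].
    + destruct r as [|r].
      * simpl coef. rewrite pow_O, Rdiv_1_r. apply levy_area_increment; auto.
      * simpl coef. rewrite Rabs_R0.
        unfold Rdiv. apply Rmult_le_pos; [lra|left; apply Rinv_0_lt_compat; lra].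
    + apply levy_area_second_diff; auto. lia.
Qed.
End Bounds.
End LevyArea.

Theorem mainTheorem7 (alpha beta : R)
  (Ha : 0 < alpha < 1) (Hb : 0 < beta < 1) (Hab : alpha + beta > 1) :
  exists C : R, 0 <= C /\
    forall (d n : nat) (v : R -> nat -> nat -> R) (w : R -> nat -> R) (Kv Kw : R),
      CalphaM n d alpha v Kv ->
      CalphaV d beta w Kw ->
      exists L : R -> nat -> R,
        levy_converges_to n d v w L /\
        CalphaV n (alpha + beta) L (C * Kv * Kw).
Proof.
  exists (levy_const alpha beta). split; [exact (levy_const_ge0 alpha beta Ha Hb Hab)|].
  intros d n v w Kv Kw Hv Hw. exists (levy_area d v w). split.
  - exact (levy_area_converges alpha beta Ha Hb Hab d n v w Kv Kw Hv Hw).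
  - exact (levy_area_holder alpha beta Ha Hb Hab d n v w Kv Kw Hv Hw).
Qed.
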